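(* For each of the sets $\{000,100,110\}$ and $\{000,001,010,011\}$, and for every set obtained from either of them by any sequence of coordinate negations and coordinate permutations, $\rho(\mathcal S)=2$.
   Context: Binary triples $(x_1,x_2,x_3)\in\{0,1\}^3$ are written $x_1x_2x_3$. Let $\mathcal S\subseteq\{0,1\}^3$ be nonempty. A distribution scheme with domain $\mathcal S$ is a pair $(P_R,\psi)$ where $P_R$ is a probability distribution on a finite set $\mathcal R$ and $\psi:\mathcal S\times\mathcal R\to\mathcal W_{12}\times\mathcal W_{23}\times\mathcal W_{31}$ for finite share alphabets. Given $\mathbf x=(x_1,x_2,x_3)\in\mathcal S$, the shares are $(W_{12},W_{23},W_{31})=\psi(\mathbf x,R)$, $R\sim P_R$. Party $P_1$ sees $V_1=(W_{12},W_{31})$, $P_2$ sees $V_2=(W_{23},W_{12})$, $P_3$ sees $V_3=(W_{31},W_{23})$. It is a 3SS scheme if (Correctness) for each $i$ there is a function $\phi_i$ with $\Pr[\phi_i(V_i)=x_i]=1$ for every $\mathbf x\in\mathcal S$, and (Perfect privacy) for each $i$ and all $\mathbf x,\mathbf x'\in\mathcal S$ with $x_i=x'_i$, $V_i$ has the same distribution under secret $\mathbf x$ as under $\mathbf x'$. The randomness complexity $\rho(\mathcal S)$ is the minimum of $\log_2|\mathcal R|$ over all 3SS schemes with domain $\mathcal S$. A coordinate negation maps $\mathcal S$ to $\{\mathbf x\oplus e_i:\mathbf x\in\mathcal S\}$; a coordinate permutation permutes the three coordinates of every element. *)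

From Stdlib Require Import Reals.
From mathcomp Require Import all_boot all_order all_algebra all_fingroup.
From mathcomp Require Import Rstruct.

Set Implicit Arguments.
Unset Strict Implicit.
Unset Printing Implicit Defensive.

Import GRing.Theory Num.Theory.

(* Binary triples x1x2x3; coordinate i is indexed by ord i-1 : 'I_3. *)
Definition trip := {ffun 'I_3 -> bool}.

Definition mktrip (a b c : bool) : trip :=
  [ffun i : 'I_3 => if val i == 0%N then a else if val i == 1%N then b else c].

Definition negate_coord (i : 'I_3) (x : trip) : trip :=
  [ffun j => if j == i then ~~ x j else x j].
Definition negate_set (i : 'I_3) (S : {set trip}) : {set trip} :=
  [set negate_coord i x | x in S].

Definition permute_coord (s : 'S_3) (x : trip) : trip := [ffun j => x (s j)].
Definition permute_set (s : 'S_3) (S : {set trip}) : {set trip} :=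
  [set permute_coord s x | x in S].

Inductive obtained_from (S0 : {set trip}) : {set trip} -> Prop :=
| obt_refl : obtained_from S0 S0
| obt_neg S i : obtained_from S0 S -> obtained_from S0 (negate_set i S)
| obt_perm S s : obtained_from S0 S -> obtained_from S0 (permute_set s S).

(* A distribution scheme: randomness set R with distribution P_R, share
   alphabets W12 W23 W31, and share map psi.  psi is given on all triples; only
   its values on the domain S matter. *)
Record scheme := Scheme {
  Rnd : finType;
  W12 : finType;
  W23 : finType;
  W31 : finType;
  PR : Rnd -> R;
  psi : trip -> Rnd -> (W12 * W23 * W31)
}.

Definition is_distribution (T : finType) (P : T -> R) : Prop :=
  (forall t, (0 <= P t)%R) /\ (\sum_(t : T) P t = 1)%R.

Definition c1 : 'I_3 := @Ordinal 3 0 isT.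
Definition c2 : 'I_3 := @Ordinal 3 1 isT.
Definition c3 : 'I_3 := @Ordinal 3 2 isT.

Section Views.
Variable sc : scheme.

Definition share12 x r := (@psi sc x r).1.1.
Definition share23 x r := (@psi sc x r).1.2.
Definition share31 x r := (@psi sc x r).2.

Definition view1 x r : W12 sc * W31 sc := (share12 x r, share31 x r).
Definition view2 x r : W23 sc * W12 sc := (share23 x r, share12 x r).
Definition view3 x r : W31 sc * W23 sc := (share31 x r, share23 x r).

Definition view_prob (V : finType) (view : trip -> Rnd sc -> V) x (v : V) : R :=
  (\sum_(r : Rnd sc | view x r == v) @PR sc r)%R.

Definition correct_for (S : {set trip}) (V : finType)
    (view : trip -> Rnd sc -> V) (i : 'I_3) : Prop :=
  exists phi : V -> bool, forall x, x \in S ->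
    (\sum_(r : Rnd sc | phi (view x r) == x i) @PR sc r)%R = 1%R.

Definition private_for (S : {set trip}) (V : finType)
    (view : trip -> Rnd sc -> V) (i : 'I_3) : Prop :=
  forall x x', x \in S -> x' \in S -> x i = x' i ->
    forall v : V, view_prob view x v = view_prob view x' v.

Definition is_3SS (S : {set trip}) : Prop :=
  is_distribution (@PR sc) /\
  correct_for S view1 c1 /\ correct_for S view2 c2 /\ correct_for S view3 c3 /\
  private_for S view1 c1 /\ private_for S view2 c2 /\ private_for S view3 c3.
End Views.

Definition log2 (x : R) : R := Rdiv (ln x) (ln 2).

Definition randomness_complexity_is (S : {set trip}) (rho : R) : Prop :=
  (exists sc : scheme, is_3SS sc S /\ log2 (INR #|Rnd sc|) = rho) /\
  (forall sc : scheme, is_3SS sc S -> Rle rho (log2 (INR #|Rnd sc|))).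

Definition S_A : {set trip} :=
  [set mktrip false false false; mktrip true false false; mktrip true true false].
Definition S_B : {set trip} :=
  [set mktrip false false false; mktrip false false true;
       mktrip false true false; mktrip false true true].

From Pilot Require Import Defs.
From Stdlib Require Import Reals.
From mathcomp Require Import all_boot all_order all_algebra all_fingroup.
From mathcomp Require Import Rstruct.
(* Reals also defines a constant c1; make the party indices of Defs visible again. *)
Import Defs.

(* Both S_A and S_B, and hence every S obtained from them (the two properties
   are invariant under negations and permutations), have
   - a constant coordinate k, and
   - a "chain" x, x + e_i, x + e_i + e_j in S with i <> j.
   Upper bound: if coordinate k is constant, the two other parties share two
   uniform bits r = (r1, r2) and each of them hands its own bit, masked by one
   of them, to P_k; P_k then sees two independent uniform bits.
   Lower bound: for a chain, let a, b, c be the shares of {i,j}, {i,k},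
   {j,k}.  Privacy of P_j and P_k across the step x -> y = x + e_i, together
   with correctness of P_i, force every value of c in the support (under y) to
   occur with two values of a; symmetrically (step y -> z = y + e_j) c takes
   two values in the support.  So the support has at least 4 points. *)

Set Implicit Arguments.
Unset Strict Implicit.
Unset Printing Implicit Defensive.

Import GRing.Theory Num.Theory Order.TTheory.
Local Open Scope ring_scope.

Section FiniteProbability.
Variables (T : finType) (P : T -> R).
Hypothesis P_ge0 : forall t, 0 <= P t.

Definition same_dist (U : eqType) (f g : T -> U) : Prop :=
  forall v, \sum_(t | f t == v) P t = \sum_(t | g t == v) P t.

Definition disjoint_supports (U : eqType) (f g : T -> U) : Prop :=
  forall t t', 0 < P t -> 0 < P t' -> f t != g t'.

Lemma same_dist_sym (U : eqType) (f g : T -> U) :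
  same_dist f g -> same_dist g f.
Proof. by move=> fg v; rewrite fg. Qed.

Lemma disjoint_supports_sym (U : eqType) (f g : T -> U) :
  disjoint_supports f g -> disjoint_supports g f.
Proof. by move=> fg t t' Pt Pt'; rewrite eq_sym fg. Qed.

Lemma event_support (p : pred T) :
  0 < \sum_(t | p t) P t -> exists2 t, p t & 0 < P t.
Proof.
move=> pos; apply/exists_inP; apply: contraTT pos => /exists_inPn none.
rewrite big1 ?ltxx // => t /none; rewrite lt_def P_ge0 andbT negbK.
exact: eqP.
Qed.

Lemma support_event (p : pred T) t :
  p t -> 0 < P t -> 0 < \sum_(s | p s) P s.
Proof.
move=> pt Pt; rewrite (bigD1 t) //=; apply: ltr_wpDr => //.
exact: sumr_ge0.
Qed.

Lemma same_dist_support (U : eqType) (f g : T -> U) t :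
  same_dist f g -> 0 < P t -> exists2 t', 0 < P t' & g t' = f t.
Proof.
move=> fg Pt.
have pos := support_event (p := fun s => f s == f t) (eqxx (f t)) Pt.
by rewrite fg in pos; have [t' /eqP gt' Pt'] := event_support pos; exists t'.
Qed.

Hypothesis P_sum1 : \sum_t P t = 1.

Lemma support_nonempty : exists t, 0 < P t.
Proof.
have pos : 0 < \sum_t P t by rewrite P_sum1 ltr01.
by have [t _ Pt] := @event_support predT pos; exists t.
Qed.

Lemma sure_event (p : pred T) : \sum_(t | p t) P t = 1 -> forall t, 0 < P t -> p t.
Proof.
move=> p1 t Pt; apply: contraT => npt.
have : 1 + \sum_(s | ~~ p s) P s = 1 + 0.
  by rewrite addr0 -{2}P_sum1 [RHS](bigID p) /= p1.
move/addrI => no_mass.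
by have := support_event (p := predC p) npt Pt; rewrite /= no_mass ltxx.
Qed.

(* Let a, b, c be shares of the pairs {i,j}, {i,k}, {j,k},
   so P_i sees (a,b), P_j sees (c,a) and P_k sees (b,c). *)
Lemma fiber (X : Type) (Ta Tb Tc : eqType)
    (a : X -> T -> Ta) (b : X -> T -> Tb) (c : X -> T -> Tc) x y :
  same_dist (fun t => (c x t, a x t)) (fun t => (c y t, a y t)) ->
  same_dist (fun t => (b x t, c x t)) (fun t => (b y t, c y t)) ->
  disjoint_supports (fun t => (a x t, b x t)) (fun t => (a y t, b y t)) ->
  forall t0, 0 < P t0 -> exists2 t1, 0 < P t1 & c y t1 = c y t0 /\ a y t1 != a y t0.
Proof.
move=> sameJ sameK sepI t0 Pt0.
have [t3 Pt3 [b3 c3]] := same_dist_support (same_dist_sym sameK) Pt0.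
have [t1 Pt1 [c1 a1]] := same_dist_support sameJ Pt3.
exists t1 => //; split; first by rewrite c1 c3.
by apply: contraNneq (sepI t3 t0 Pt3 Pt0) => a1_eq; rewrite -a1 a1_eq b3.
Qed.

Lemma four_outcomes (X : Type) (Ta Tb Tc : eqType)
    (a : X -> T -> Ta) (b : X -> T -> Tb) (c : X -> T -> Tc) x y z :
  same_dist (fun t => (c x t, a x t)) (fun t => (c y t, a y t)) ->
  same_dist (fun t => (b x t, c x t)) (fun t => (b y t, c y t)) ->
  same_dist (fun t => (a y t, b y t)) (fun t => (a z t, b z t)) ->
  same_dist (fun t => (b y t, c y t)) (fun t => (b z t, c z t)) ->
  disjoint_supports (fun t => (a x t, b x t)) (fun t => (a y t, b y t)) ->
  disjoint_supports (fun t => (c y t, a y t)) (fun t => (c z t, a z t)) ->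
  (4 <= #|T|)%N.
Proof.
move=> sameJxy sameKxy sameIyz sameKyz sepIxy sepJyz.
have a_varies := fiber sameJxy sameKxy sepIxy.
have c_varies := fiber (a := c) (b := a) (c := b) (same_dist_sym sameKyz)
  (same_dist_sym sameIyz) (disjoint_supports_sym sepJyz).
have [t0 Pt0] := support_nonempty.
have [t1 Pt1 [_ c10]] := c_varies t0 Pt0.
have [t2 _ [c20 a20]] := a_varies t0 Pt0.
have [t3 _ [c31 a31]] := a_varies t1 Pt1.
have -> : 4%N = size [:: t0; t1; t2; t3] by [].
rewrite cardT; apply: uniq_leq_size => [|t _]; last by rewrite mem_enum.
move/eqP: c10 => c10; move/eqP: a20 => a20; move/eqP: a31 => a31.
rewrite /= !inE !negb_or andbT.
by do !(apply/andP; split); apply/eqP => eq_t; subst; congruence.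
Qed.

End FiniteProbability.

Lemma ord3P (i : 'I_3) : [\/ i = c1, i = c2 | i = c3].
Proof.
by case: i => -[|[|[|//]]] lti; [apply: Or31 | apply: Or32 | apply: Or33];
  apply: val_inj.
Qed.

Lemma negate_coordK (i : 'I_3) : involutive (negate_coord i).
Proof.
by move=> x; apply/ffunP => j; rewrite !ffunE; case: (j == i); rewrite ?negbK.
Qed.

Lemma negate_coord_other (i j : 'I_3) x : i != j -> negate_coord i x j = x j.
Proof. by rewrite ffunE eq_sym => /negbTE ->. Qed.

Lemma private_flip (sc : scheme) S (V : finType) (view : trip -> Rnd sc -> V)
    (p q : 'I_3) x :
  private_for S view p -> x \in S -> negate_coord q x \in S -> q != p ->
  same_dist (@PR sc) (view x) (view (negate_coord q x)).
Proof.
by move=> priv xS yS nqp v; apply: priv => //; rewrite negate_coord_other.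
Qed.

Lemma correct_flip (sc : scheme) S (V : finType) (view : trip -> Rnd sc -> V)
    (p : 'I_3) x :
  is_distribution (@PR sc) -> correct_for S view p ->
  x \in S -> negate_coord p x \in S ->
  disjoint_supports (@PR sc) (view x) (view (negate_coord p x)).
Proof.
move=> [P_ge0 P_sum1] [phi dec] xS yS t t' Pt Pt'; apply/eqP => same_view.
have := sure_event P_ge0 P_sum1 (dec _ xS) Pt.
have := sure_event P_ge0 P_sum1 (dec _ yS) Pt'.
by rewrite -same_view ffunE eqxx => /eqP ->; case: (x p).
Qed.

(* The three cases are the same argument, the
   shares of the pairs {i,i+1}, {i,i+2}, {i+1,i+2} playing the roles of
   a, b, c in four_outcomes. *)
Lemma chain_cyclic_lower (sc : scheme) S x (i : 'I_3) :
  is_3SS sc S -> x \in S -> negate_coord i x \in S ->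
  negate_coord (ordS i) (negate_coord i x) \in S -> (4 <= #|Rnd sc|)%N.
Proof.
move=> [dist [cor1 [cor2 [cor3 [priv1 [priv2 priv3]]]]]] xS yS zS.
have [P_ge0 P_sum1] := dist.
case: (ord3P i) => ->{i} in yS zS *.
- rewrite [ordS c1](_ : _ = c2) in zS; last exact: val_inj.
  exact: (four_outcomes P_ge0 P_sum1
    (a := @share12 sc) (b := @share31 sc) (c := @share23 sc)
    (private_flip priv2 xS yS isT) (private_flip priv3 xS yS isT)
    (private_flip priv1 yS zS isT) (private_flip priv3 yS zS isT)
    (correct_flip dist cor1 xS yS) (correct_flip dist cor2 yS zS)).
- rewrite [ordS c2](_ : _ = c3) in zS; last exact: val_inj.
  exact: (four_outcomes P_ge0 P_sum1
    (a := @share23 sc) (b := @share12 sc) (c := @share31 sc)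
    (private_flip priv3 xS yS isT) (private_flip priv1 xS yS isT)
    (private_flip priv2 yS zS isT) (private_flip priv1 yS zS isT)
    (correct_flip dist cor2 xS yS) (correct_flip dist cor3 yS zS)).
- rewrite [ordS c3](_ : _ = c1) in zS; last exact: val_inj.
  exact: (four_outcomes P_ge0 P_sum1
    (a := @share31 sc) (b := @share23 sc) (c := @share12 sc)
    (private_flip priv1 xS yS isT) (private_flip priv2 xS yS isT)
    (private_flip priv3 yS zS isT) (private_flip priv2 yS zS isT)
    (correct_flip dist cor3 xS yS) (correct_flip dist cor1 yS zS)).
Qed.

Definition has_chain (S : {set trip}) : Prop :=
  exists x (i j : 'I_3), [/\ i != j, x \in S, negate_coord i x \in S
                            & negate_coord j (negate_coord i x) \in S].

Lemma ord3_cyclic_neighbours (i j : 'I_3) : i != j -> j = ordS i \/ i = ordS j.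
Proof.
by case: (ord3P i) (ord3P j) => -> [] ->; rewrite ?eqxx // => _;
  [left | right | right | left | left | right]; apply: val_inj.
Qed.

(* A chain read
   backwards is a chain with the two steps swapped, so one of the two
   readings goes in the cyclic direction of chain_cyclic_lower. *)
Lemma chain_lower (sc : scheme) S : is_3SS sc S -> has_chain S -> (4 <= #|Rnd sc|)%N.
Proof.
move=> ok [x [i [j [nij xS yS zS]]]].
case: (ord3_cyclic_neighbours nij) => [-> | ->] in zS yS *.
  exact: chain_cyclic_lower ok xS yS zS.
apply: (chain_cyclic_lower (i := j) ok zS).
  by rewrite negate_coordK.
by rewrite !negate_coordK.
Qed.

Definition uniform2 (r : bool * bool) : R := 4%:R^-1.

Lemma uniform2_distribution : is_distribution uniform2.
Proof.
split=> [r|]; first by rewrite invr_ge0 ler0n.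
rewrite sumr_const card_prod card_bool (_ : (2 * 2)%N = 4%N) //.
by rewrite /uniform2 -(mulr_natr (4%:R)^-1 4) mulVf // pnatr_eq0.
Qed.

Lemma correct_everywhere (sc : scheme) (S : {set trip}) (V : finType)
    (view : trip -> Rnd sc -> V) (p : 'I_3) (phi : V -> bool) :
  is_distribution (@PR sc) -> (forall x r, x \in S -> phi (view x r) = x p) ->
  correct_for S view p.
Proof.
move=> [_ P_sum1] dec; exists phi => x xS.
by rewrite -P_sum1; apply: eq_bigl => r; rewrite dec ?eqxx.
Qed.

Lemma view_prob_relabel (sc : scheme) (V : finType) (view : trip -> Rnd sc -> V)
    (h : Rnd sc -> Rnd sc) x x' :
  injective h -> (forall r, PR (h r) = PR r) -> (forall r, view x' (h r) = view x r) ->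
  forall v, view_prob view x v = view_prob view x' v.
Proof.
move=> h_inj hP hview v; rewrite /view_prob [RHS](reindex_inj h_inj) /=.
by apply: eq_big => r; rewrite ?hview ?hP.
Qed.

Definition mask2 (m r : bool * bool) : bool * bool := (r.1 (+) m.1, r.2 (+) m.2).

Lemma mask2_inj m : injective (mask2 m).
Proof. by apply: (can_inj (g := mask2 m)) => -[r1 r2]; rewrite /mask2 /= !addbK. Qed.

Definition unmask_snd (v : (bool * bool) * bool) : bool := v.1.2 (+) v.2.
Definition unmask_fst (v : bool * (bool * bool)) : bool := v.2.1 (+) v.1.

Definition scheme_const1 : scheme :=
  @Scheme (bool * bool)%type bool (bool * bool)%type bool uniform2
    (fun x r => ((r.2 (+) x c2, r), r.1 (+) x c3)).
Definition scheme_const2 : scheme :=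
  @Scheme (bool * bool)%type bool bool (bool * bool)%type uniform2
    (fun x r => ((r.1 (+) x c1, r.2 (+) x c3), r)).
Definition scheme_const3 : scheme :=
  @Scheme (bool * bool)%type (bool * bool)%type bool bool uniform2
    (fun x r => ((r, r.1 (+) x c2), r.2 (+) x c1)).

Lemma scheme_const1_ok (S : {set trip}) (b : bool) :
  (forall w, w \in S -> w c1 = b) -> is_3SS scheme_const1 S.
Proof.
move=> const; have dist : is_distribution (@PR scheme_const1) := uniform2_distribution.
refine (conj dist (conj _ (conj _ (conj _ (conj _ (conj _ _)))))).
- by apply: (correct_everywhere (phi := fun=> b) dist) => x r /const.
- by apply: (correct_everywhere (phi := unmask_snd) dist) => x r _; apply: addKb.
- by apply: (correct_everywhere (phi := unmask_fst) dist) => x r _; apply: addKb.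
- move=> x x' _ _ _; apply: (view_prob_relabel (sc := scheme_const1)
    (@mask2_inj (x c3 (+) x' c3, x c2 (+) x' c2))) => // r.
  by rewrite /view1 /share12 /share31 /mask2 /= -!addbA !addbb !addbF.
- by move=> x x' _ _ same v; rewrite /view_prob /view2 /share23 /share12 /= same.
- by move=> x x' _ _ same v; rewrite /view_prob /view3 /share31 /share23 /= same.
Qed.

Lemma scheme_const2_ok (S : {set trip}) (b : bool) :
  (forall w, w \in S -> w c2 = b) -> is_3SS scheme_const2 S.
Proof.
move=> const; have dist : is_distribution (@PR scheme_const2) := uniform2_distribution.
refine (conj dist (conj _ (conj _ (conj _ (conj _ (conj _ _)))))).
- by apply: (correct_everywhere (phi := unmask_fst) dist) => x r _; apply: addKb.
- by apply: (correct_everywhere (phi := fun=> b) dist) => x r /const.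
- by apply: (correct_everywhere (phi := unmask_snd) dist) => x r _; apply: addKb.
- by move=> x x' _ _ same v; rewrite /view_prob /view1 /share12 /share31 /= same.
- move=> x x' _ _ _; apply: (view_prob_relabel (sc := scheme_const2)
    (@mask2_inj (x c1 (+) x' c1, x c3 (+) x' c3))) => // r.
  by rewrite /view2 /share23 /share12 /mask2 /= -!addbA !addbb !addbF.
- by move=> x x' _ _ same v; rewrite /view_prob /view3 /share31 /share23 /= same.
Qed.

Lemma scheme_const3_ok (S : {set trip}) (b : bool) :
  (forall w, w \in S -> w c3 = b) -> is_3SS scheme_const3 S.
Proof.
move=> const; have dist : is_distribution (@PR scheme_const3) := uniform2_distribution.
refine (conj dist (conj _ (conj _ (conj _ (conj _ (conj _ _)))))).
- by apply: (correct_everywhere (phi := unmask_snd) dist) => x r _; apply: addKb.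
- by apply: (correct_everywhere (phi := unmask_fst) dist) => x r _; apply: addKb.
- by apply: (correct_everywhere (phi := fun=> b) dist) => x r /const.
- by move=> x x' _ _ same v; rewrite /view_prob /view1 /share12 /share31 /= same.
- by move=> x x' _ _ same v; rewrite /view_prob /view2 /share23 /share12 /= same.
- move=> x x' _ _ _; apply: (view_prob_relabel (sc := scheme_const3)
    (@mask2_inj (x c2 (+) x' c2, x c1 (+) x' c1))) => // r.
  by rewrite /view3 /share31 /share23 /mask2 /= -!addbA !addbb !addbF.
Qed.

Definition has_const_coord (S : {set trip}) : Prop :=
  exists (k : 'I_3) (b : bool), forall w, w \in S -> w k = b.

Lemma const_coord_upper (S : {set trip}) :
  has_const_coord S -> exists sc : scheme, is_3SS sc S /\ #|Rnd sc| = 4%N.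
Proof.
have card4 : #|{: bool * bool}| = 4%N by rewrite card_prod card_bool.
move=> [k [b const]]; case: (ord3P k) => -> in const.
- by exists scheme_const1; split; [exact: scheme_const1_ok const | exact: card4].
- by exists scheme_const2; split; [exact: scheme_const2_ok const | exact: card4].
- by exists scheme_const3; split; [exact: scheme_const3_ok const | exact: card4].
Qed.

Lemma negate_coordC (i j : 'I_3) x :
  negate_coord i (negate_coord j x) = negate_coord j (negate_coord i x).
Proof. by apply/ffunP => k; rewrite !ffunE; case: (k == i); case: (k == j). Qed.

Lemma permute_negate (s : 'S_3) i x :
  permute_coord s (negate_coord i x) = negate_coord (s^-1 i)%g (permute_coord s x).
Proof. by apply/ffunP => k; rewrite !ffunE (can2_eq (permK s) (permKV s)). Qed.

Lemma obtained_from_invariant (Q : {set trip} -> Prop) S0 S :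
  (forall i S, Q S -> Q (negate_set i S)) ->
  (forall s S, Q S -> Q (permute_set s S)) ->
  Q S0 -> obtained_from S0 S -> Q S.
Proof. by move=> Qneg Qperm QS0; elim=> // S' ? _; [apply: Qneg | apply: Qperm]. Qed.

Lemma has_chain_negate i S : has_chain S -> has_chain (negate_set i S).
Proof.
move=> [x [j [k [njk xS yS zS]]]]; exists (negate_coord i x), j, k.
rewrite (negate_coordC j i) (negate_coordC k i).
by split; rewrite // imset_f.
Qed.

Lemma has_chain_permute s S : has_chain S -> has_chain (permute_set s S).
Proof.
move=> [x [i [j [nij xS yS zS]]]].
exists (permute_coord s x), (s^-1 i)%g, (s^-1 j)%g.
rewrite (inj_eq (@perm_inj _ (s^-1)%g)) -!permute_negate.
by split; rewrite // imset_f.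
Qed.

Lemma has_const_coord_negate i S :
  has_const_coord S -> has_const_coord (negate_set i S).
Proof.
move=> [k [b const]]; exists k, (if k == i then ~~ b else b).
by move=> _ /imsetP[w wS ->]; rewrite ffunE const.
Qed.

Lemma has_const_coord_permute s S :
  has_const_coord S -> has_const_coord (permute_set s S).
Proof.
move=> [k [b const]]; exists (s^-1 k)%g, b.
by move=> _ /imsetP[w wS ->]; rewrite ffunE permKV const.
Qed.

Lemma negate_mktrip i a b c : negate_coord i (mktrip a b c) =
  mktrip (if i == c1 then ~~ a else a) (if i == c2 then ~~ b else b)
         (if i == c3 then ~~ c else c).
Proof.
by apply/ffunP => j; rewrite !ffunE; case: (ord3P i) (ord3P j) => -> [] ->.
Qed.

Lemma S_A_chain : has_chain S_A.
Proof.
exists (mktrip false false false), c1, c2.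
by split; rewrite ?inE ?negate_mktrip //= eqxx ?orbT.
Qed.

Lemma S_B_chain : has_chain S_B.
Proof.
exists (mktrip false false true), c3, c2.
by split; rewrite ?inE ?negate_mktrip //= eqxx ?orbT.
Qed.

Lemma S_A_const : has_const_coord S_A.
Proof.
by exists c3, false => w; rewrite !inE -!orbA => /or3P[] /eqP ->; rewrite ffunE.
Qed.

Lemma S_B_const : has_const_coord S_B.
Proof.
by exists c1, false => w; rewrite !inE -!orbA => /or4P[] /eqP ->; rewrite ffunE.
Qed.

Section Log2.
Local Open Scope R_scope.

Lemma ln2_pos : 0 < ln 2.
Proof.
by rewrite -ln_1; apply: ln_increasing; [apply: Rlt_0_1 | apply: Rlt_plus_1].
Qed.

Lemma log2_le x y : 0 < x -> x <= y -> log2 x <= log2 y.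
Proof.
move=> x_pos le_xy; apply: Rmult_le_compat_r.
  by apply: Rlt_le; apply: Rinv_0_lt_compat; apply: ln2_pos.
case: (Rle_lt_or_eq_dec _ _ le_xy) => [lt_xy | ->]; last exact: Rle_refl.
by apply: Rlt_le; apply: ln_increasing.
Qed.

Lemma log2_4 : log2 (INR 4) = R1 + R1.
Proof.
rewrite /log2 (_ : INR 4 = 2 * 2); last by rewrite /=; ring.
rewrite ln_mult; try exact: Rlt_0_2.
by field; apply: Rgt_not_eq; apply: ln2_pos.
Qed.

Lemma log2_ge2 n : (4 <= n)%N -> R1 + R1 <= log2 (INR n).
Proof.
move=> /ssrnat.leP le4n; rewrite -log2_4; apply: log2_le; last exact: le_INR.
by apply: lt_0_INR; apply/ssrnat.ltP.
Qed.
End Log2.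

Theorem mainTheorem8 (S : {set trip}) :
  obtained_from S_A S \/ obtained_from S_B S ->
  randomness_complexity_is S (Rplus R1 R1).
Proof.
move=> obtained.
have [chain const] : has_chain S /\ has_const_coord S.
  case: obtained => obt; split; apply: (obtained_from_invariant _ _ _ obt);
    by [apply: has_chain_negate | apply: has_chain_permute
       | apply: has_const_coord_negate | apply: has_const_coord_permute
       | exact: S_A_chain | exact: S_B_chain | exact: S_A_const | exact: S_B_const].
split.
- have [sc [ok card4]] := const_coord_upper const.
  by exists sc; rewrite card4 log2_4.
- by move=> sc ok; apply: log2_ge2; apply: chain_lower ok chain.
Qed.
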